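(* For every integer $n\ge 2$, $$\operatorname{op}_{[2,\underbrace{1,\dots,1}_{n-2}]}(123) = \frac{3(n-1)\binom{2n-2}{n-1}}{n(n+1)}.$$
   Context: An ordered set partition of $[N]$ into $k$ blocks is a sequence $B_1/B_2/\cdots/B_k$ of nonempty, pairwise disjoint subsets of $[N]$ whose union is $[N]$; the order of the blocks matters, but not the order of elements within a block. For a permutation $\rho=\rho_1\cdots\rho_m\in\mathcal{S}_m$, an ordered partition $B_1/\cdots/B_k$ contains $\rho$ if there are block indices $i_1<i_2<\cdots<i_m$ and elements $b_j\in B_{i_j}$ such that $b_1\cdots b_m$ is order-isomorphic to $\rho$; otherwise it avoids $\rho$. For positive integers $b_1,\dots,b_k$, $\operatorname{op}_{[b_1,\dots,b_k]}(\rho)$ is the number of $\rho$-avoiding ordered partitions $B_1/\cdots/B_k$ of $[b_1+\cdots+b_k]$ with $|B_i|=b_i$ for all $i$. Thus $\operatorname{op}_{[2,1,\dots,1]}(123)$ (with $n-2$ ones) counts $123$-avoiding ordered partitions of $[n]$ whose first block has size $2$ and all other $n-2$ blocks have size $1$. *)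

From mathcomp Require Import all_boot all_order all_algebra all_fingroup.
Set Implicit Arguments. Unset Strict Implicit. Unset Printing Implicit Defensive.

(* Elements of [N] are represented 0-based by 'I_N (order preserved);
   blocks B_1/.../B_k are indexed by 'I_k. *)

Definition ordered_partition (N k : nat) (B : {ffun 'I_k -> {set 'I_N}}) : bool :=
  [forall i, B i != set0] &&
  [forall i, forall j, (i != j) ==> [disjoint B i & B j]] &&
  (\bigcup_(i < k) B i == [set: 'I_N]).

Definition contains_pat (N k m : nat) (rho : 'S_m) (B : {ffun 'I_k -> {set 'I_N}}) : bool :=
  [exists idx : {ffun 'I_m -> 'I_k}, exists el : {ffun 'I_m -> 'I_N},
     [forall j : 'I_m, forall j' : 'I_m, (j < j')%N ==> (idx j < idx j')%N] &&
     [forall j : 'I_m, el j \in B (idx j)] &&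
     [forall j : 'I_m, forall j' : 'I_m, ((el j < el j')%N == (rho j < rho j')%N)]].

Definition op (b : seq nat) (m : nat) (rho : 'S_m) : nat :=
  #|[set B : {ffun 'I_(size b) -> {set 'I_(sumn b)}} |
      ordered_partition B &&
      [forall i : 'I_(size b), #|B i| == nth 0 b i] &&
      ~~ contains_pat rho B]|.

Definition p123 : 'S_3 := 1%g.

(* If the first block is {x < y} and the other blocks are the singletons {f_2}, ..., {f_(n-1)},
   then the partition contains 123 exactly when the word x f_2 ... f_(n-1) does: y can only play
   the role of the 1, and x plays it at least as well.  So op counts the pairs (y, w) where w is a
   123-avoiding arrangement of [n] minus y whose first letter is below y.  Arrangements that may
   follow a given prefix are counted by recursion on their first letter; the only information about
   the prefix that matters is its minimum and the least letter that would complete a 123 with it,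
   and the resulting counts are the ballot numbers B(k, j) = (k - j + 1)/(k + 1) * C(k + j, j).
   Summing over y and x gives op = B(n, n - 1) - B(n - 1, n - 1). *)

From mathcomp Require Import all_boot all_order all_algebra all_fingroup.
From mathcomp Require Import ring zify.
Set Implicit Arguments. Unset Strict Implicit. Unset Printing Implicit Defensive.

Fixpoint has12_above (m : nat) (w : seq nat) : bool :=
  if w is y :: w' then ((m < y) && has (fun z => y < z) w') || has12_above m w'
  else false.

Fixpoint has123 (w : seq nat) : bool :=
  if w is x :: w' then has12_above x w' || has123 w' else false.

Lemma has12_above_min a b w :
  has12_above (minn a b) w = has12_above a w || has12_above b w.
Proof.
elim: w => //= y w ->; rewrite gtn_min.
by case: (a < y); case: (b < y); case: (has _ w); case: (has12_above a w); case: (has12_above b w).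
Qed.

Lemma has12_above_ub N w : all (fun z => z < N) w -> has12_above N w = false.
Proof.
elim: w => //= y w IH /andP [yN /IH ->]; by rewrite ltnNge ltnW.
Qed.

Lemma has12_aboveP x s :
  reflect (exists j k, [/\ j < k, k < size s, x < nth 0 s j & nth 0 s j < nth 0 s k])
          (has12_above x s).
Proof.
apply: (iffP idP).
  elim: s => //= y s IH /orP [/andP [xy /(has_nthP 0) [k ks yk]]|/IH [j [k [jk ks xj jk']]]].
    by exists 0, k.+1.
  by exists j.+1, k.+1.
elim: s => [|y s IH] [j [k [jk ks xj jk']]] //=.
case: j jk xj jk' => [|j] jk xj jk'; case: k jk ks jk' => [|k] //= jk ks jk'.
  by rewrite xj; apply/orP; left; apply/(has_nthP 0); exists k.
by apply/orP; right; apply: IH; exists j, k.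
Qed.

Lemma has123P s :
  reflect (exists i j k, [/\ i < j, j < k, k < size s & nth 0 s i < nth 0 s j < nth 0 s k])
          (has123 s).
Proof.
apply: (iffP idP).
  elim: s => //= x s IH /orP [/has12_aboveP [j [k [jk ks xj jk']]]|].
    by exists 0, j.+1, k.+1; rewrite xj jk'.
  move=> /IH [i [j [k [ij jk ks /andP [a b]]]]].
  by exists i.+1, j.+1, k.+1; rewrite a b.
elim: s => [|x s IH] [i [j [k [ij jk ks /andP [a b]]]]] //=.
case: i ij a => [|i] ij a; case: j ij jk a b => [|j] //= ij jk a b;
  case: k jk ks b => [|k] //= jk ks b.
  by apply/orP; left; apply/has12_aboveP; exists j, k.
by apply/orP; right; apply: IH; exists i, j, k; rewrite a b.
Qed.

(* [w] can follow a 123-free prefix with minimum [m] without creating a 123, where [t] is the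
   least letter that would complete a 123 with the prefix. *)
Definition free123 (m t : nat) (w : seq nat) : bool :=
  [&& ~~ has123 w, all (fun z => z < t) w & ~~ has12_above m w].

Lemma free123_cons m t x w :
  free123 m t (x :: w) =
  (x < t) && free123 (minn m x) (if m < x then minn t x.+1 else t) w.
Proof.
rewrite /free123 /= has12_above_min.
case mx: (m < x) => /=; last first.
  by case: (x < t); case: (has123 w); case: (all _ w);
     case: (has12_above m w); case: (has12_above x w).
have -> : all (fun z => z < minn t x.+1) w = all (predI (fun z => z < t) (fun z => ~~ (x < z))) w.
  by apply: eq_all => z /=; rewrite leq_min ltnS (leqNgt z x).
rewrite all_predI all_predC /=.
by case: (x < t); case: (has _ w); case: (has123 w); case: (all _ w);
   case: (has12_above m w); case: (has12_above x w).
Qed.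

Lemma free123_top N w : all (fun z => z < N) w -> free123 N N w = ~~ has123 w.
Proof. by move=> wN; rewrite /free123 wN has12_above_ub // andbT. Qed.

(* [ballot k j] counts the 123-avoiding permutations of [k] in which the k - j largest letters
   appear in decreasing order (see count_free123E). *)
Fixpoint ballot (L p : nat) : nat :=
  if L is L'.+1 then \sum_(i < p) ballot L' i + (if p < L'.+1 then ballot L' p else 0)
  else 1.

Lemma ballotn0 L : ballot L 0 = 1.
Proof. by elim: L => //= L IH; rewrite big_ord0 IH. Qed.

Lemma ballotSS L p : p <= L ->
  ballot L.+1 p.+1 = ballot L.+1 p + (if p < L then ballot L p.+1 else 0).
Proof. by move=> pL; rewrite /= big_ord_recr /= !ltnS pL. Qed.

Lemma ballot_sum m :
  \sum_(b < m.+2) \sum_(x < b) ballot m x + ballot m.+1 m.+1 = ballot m.+2 m.+1.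
Proof.
rewrite big_ord_recl big_ord0 add0n [RHS]/= ltnSn; congr (_ + _).
by apply: eq_bigr => i _ /=; rewrite big_ord_recr /= ltn_ord.
Qed.

Lemma card_set_tuple_cons (T : finType) k (P : pred (k.+1.-tuple T)) :
  #|[set s | P s]| = \sum_(x : T) #|[set s : k.-tuple T | P [tuple of x :: s]]|.
Proof.
rewrite -sum1dep_card (reindex (fun p : T * k.-tuple T => [tuple of p.1 :: p.2])) /=; last first.
  exists (fun s => (thead s, [tuple of behead s])) => [[x s]|s] _ /=.
    by congr pair; apply: val_inj.
  by rewrite -tuple_eta.
rewrite -(pair_big_dep xpredT (fun (x : T) (s : k.-tuple T) => P [tuple of x :: s])
                       (fun _ _ => 1)) /=.
by apply: eq_bigr => x _; rewrite sum1dep_card.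
Qed.

Lemma card_set_pair (A B : finType) (P : pred (A * B)) :
  #|[set p | P p]| = \sum_(a : A) #|[set b : B | P (a, b)]|.
Proof.
rewrite -sum1dep_card (eq_bigl (fun p : A * B => xpredT p.1 && P (p.1, p.2))); last by case.
rewrite -(pair_big_dep xpredT (fun a b => P (a, b)) (fun _ _ => 1)) /=.
by apply: eq_bigr => a _; rewrite sum1dep_card.
Qed.

Section Arrangements.
Variable N : nat.
Implicit Types (R S : {set 'I_N}) (m t : nat).

Lemma set_ord_max S y : y \in S -> exists2 M, M \in S & forall x, x \in S -> x <= M.
Proof. by move=> yS; case: (arg_maxnP val yS) => M; exists M. Qed.

Lemma sum_rank (F : nat -> nat) S :
  \sum_(x in S) F #|[set r in S | r < x]| = \sum_(i < #|S|) F i.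
Proof.
move cS: #|S| => n; elim: n S cS => [|n IH] S cS.
  by rewrite (cards0_eq cS) big_set0 big_ord0.
have [y yS] : {y | y \in S} by apply/sigW/set0Pn; rewrite -card_gt0 cS.
have [M MS Mmax] := set_ord_max yS.
have cSM : #|S :\ M| = n by move: cS; rewrite (cardsD1 M) MS add1n => -[].
have below_M : [set r in S | r < M] = S :\ M.
  apply/setP => r; rewrite !inE andbC; case rS: (r \in S); rewrite ?andbF //=.
  by rewrite ltn_neqAle Mmax // andbT val_eqE.
rewrite (bigD1 M) //= big_ord_recr /= addnC below_M cSM -(IH _ cSM).
congr (_ + _); apply: eq_big => [x|x /andP [xS xM]]; first by rewrite !inE andbC.
congr (F _); apply: eq_card => r; rewrite !inE.
by case: (r =P M) => [->|] //=; rewrite ltnNge Mmax ?andbF.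
Qed.

Lemma sum_max_above (c : nat) S m : {in S, forall r, val r != m} ->
  \sum_(x in S | m < x) (if [forall r in S, r <= x] then c else 0) =
  if #|[set r in S | r < m]| < #|S| then c else 0.
Proof.
move=> Sm; case: (set_0Vmem S) => [->|[y yS]].
  by rewrite cards0 big_pred0 // => x; rewrite inE.
have [M MS Mmax] := set_ord_max yS.
case: (ltnP M m) => [Mm|mM].
  have -> : [set r in S | r < m] = S.
    by apply/setP => r; rewrite inE andb_idr // => /Mmax /leq_ltn_trans; apply.
  rewrite ltnn big1 // => x /andP [/Mmax xM mx].
  by have := leq_ltn_trans xM Mm; rewrite ltnNge ltnW.
have {mM}mM : m < M by rewrite ltn_neqAle eq_sym Sm.
have -> : #|[set r in S | r < m]| < #|S|.
  apply: proper_card; apply/properP; split; first by apply/subsetP => r; rewrite inE => /andP [].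
  by exists M; rewrite // inE MS ltnNge ltnW.
rewrite (bigD1 M) /=; last by rewrite MS.
rewrite (_ : [forall r in S, r <= M]); last by apply/forall_inP.
rewrite big1 ?addn0 // => x /andP [/andP [xS _] xM].
case: ifP => // /forall_inP /(_ M MS) Mx.
by case/eqP: xM; apply: val_inj; apply/eqP; rewrite eqn_leq Mx Mmax.
Qed.

Definition count_free123 k R m t :=
  #|[set s : k.-tuple 'I_N | uniq s && ([set:: s] == R) && free123 m t (map val s)]|.

Lemma count_free123_nil m t : count_free123 0 set0 m t = 1.
Proof.
apply: (@eq_card1 _ [tuple]) => s.
by rewrite tuple0 !inE /= set_nil !eqxx.
Qed.

Lemma count_free123_cons k R m t :
  count_free123 k.+1 R m t =
  \sum_(x in R | x < t) count_free123 k (R :\ x) (minn m x) (if m < x then minn t x.+1 else t).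
Proof.
rewrite /count_free123 card_set_tuple_cons [RHS]big_mkcond /=; apply: eq_bigr => x _.
case: ifP => [/andP [xR xt]|xRt].
  apply: eq_card => s; rewrite !inE /= free123_cons xt /= set_cons.
  have <- : (x \notin s) && (x |: [set:: s] == R) = ([set:: s] == R :\ x).
    apply/andP/eqP => [[xs /eqP <-]|sR]; first by rewrite setU1K // inE.
    split; last by rewrite sR setD1K.
    by move: (setD11 x R); rewrite -sR inE => ->.
  by case: (x \in s); case: (uniq s).
apply: eq_card0 => s; rewrite !inE /= free123_cons set_cons.
apply/and3P => -[/andP [_ /eqP sR] xt _].
by move: xRt; rewrite -sR !inE eqxx xt.
Qed.

Lemma count_free123_out k R m t :
  ~~ [forall r in R, r < t] -> count_free123 k R m t = 0.
Proof.
move=> /forall_inPn [r rR rt]; apply: eq_card0 => s; rewrite !inE.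
apply/negP => /andP [/andP [_ /eqP sR] /and3P [_ /allP st _]].
by case/negP: rt; apply: st; apply: map_f; rewrite -sR inE in rR.
Qed.

Lemma count_free123E k R m t :
  #|R| = k -> {in R, forall r, val r != m} -> [forall r in R, r < t] ->
  count_free123 k R m t = ballot k #|[set r in R | r < m]|.
Proof.
elim: k R m t => [|k IH] R m t cR Rm Rt; first by rewrite (cards0_eq cR) count_free123_nil.
have cRx x : x \in R -> #|R :\ x| = k by move=> xR; move: cR; rewrite (cardsD1 x) xR => -[].
have Rxt x : [forall r in R :\ x, r < t].
  by apply/forall_inP => r /setD1P [_ /(forall_inP Rt)].
rewrite count_free123_cons (eq_bigl (mem R)); last first.
  by move=> x; rewrite andb_idr // => /(forall_inP Rt).
rewrite (bigID (fun x : 'I_N => x < m)) /=; congr (_ + _).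
  rewrite -sum_rank; apply: eq_big => [x|x /andP [xR xm]]; first by rewrite inE.
  have -> : (m < x) = false by rewrite ltnNge ltnW.
  rewrite (minn_idPr (ltnW xm)) IH ?cRx ?Rxt //; last first.
    by move=> r /setD1P [rx _]; rewrite val_eqE.
  congr (ballot k _); apply: eq_card => r; rewrite !inE.
  case rx: (r < x); rewrite ?andbF // (ltn_trans rx xm) !andbT.
  by have -> : r != x by apply: contraTneq rx => ->; rewrite ltnn.
have above x : x \in R -> ~~ (x < m) = (m < x).
  by move=> xR; rewrite -leqNgt leq_eqVlt eq_sym (negbTE (Rm x xR)).
rewrite -cR -sum_max_above //; apply: eq_big => [x|x /andP [xR]].
  by case xR: (x \in R); rewrite //= above.
rewrite above // => mx.
rewrite (minn_idPl (ltnW mx)) mx.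
case: ifP => [/forall_inP Rx|/negbT Rx]; last first.
  apply: count_free123_out; apply: contra Rx => /forall_inP Rx.
  apply/forall_inP => r rR; case: (r =P x) => [-> //|/eqP rx].
  by have := Rx r; rewrite !inE rx rR leq_min ltnS => /(_ isT) /andP [].
rewrite IH ?cRx //.
- congr (ballot k _); apply: eq_card => r; rewrite !inE.
  by case: (r =P x) => [->|_] //=; rewrite ltnNge (ltnW mx) andbF.
- by move=> r /setD1P [_ /Rm].
- by apply/forall_inP => r /setD1P [_ rR]; rewrite leq_min ltnS (forall_inP Rt) ?Rx.
Qed.

End Arrangements.

Lemma contains123P k N (B : {ffun 'I_k -> {set 'I_N}}) :
  reflect (exists i j l : 'I_k, exists a b c : 'I_N,
             [/\ i < j < l, [/\ a \in B i, b \in B j & c \in B l] & a < b < c])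
          (contains_pat p123 B).
Proof.
pose o0 := @Ordinal 3 0 isT; pose o1 := @Ordinal 3 1 isT; pose o2 := @Ordinal 3 2 isT.
apply: (iffP existsP) => [[idx /existsP [el]]|].
  move=> /andP [/andP [/forallP inc /forallP mem] /forallP iso].
  have lt j j' : (el j < el j') = (j < j').
    by have := forallP (iso j) j'; rewrite /p123 !perm1 => /eqP.
  exists (idx o0), (idx o1), (idx o2), (el o0), (el o1), (el o2).
  by rewrite !mem !lt (implyP (forallP (inc o0) o1)) ?(implyP (forallP (inc o1) o2)).
move=> [i [j [l [a [b [c [/andP [ij jl] [aB bB cB] /andP [ab bc]]]]]]]].
have ac := ltn_trans ab bc.
exists [ffun x : 'I_3 => nth i [:: i; j; l] x]; apply/existsP.
exists [ffun x : 'I_3 => nth a [:: a; b; c] x]; apply/andP; split; [apply/andP; split|].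
- apply/forallP => -[[|[|[|x]]] hx] //; apply/forallP => -[[|[|[|y]]] hy] //.
  all: rewrite ?ffunE /=.
  + exact: ij.
  + exact: ltn_trans ij jl.
  + exact: jl.
- by apply/forallP => -[[|[|[|x]]] hx] //; rewrite !ffunE.
- apply/forallP => -[[|[|[|x]]] hx] //; apply/forallP => -[[|[|[|y]]] hy] //.
  all: rewrite /p123 !perm1 ?ffunE /=.
  all: by rewrite ?ltnn ?ab ?bc ?ac // ltnNge ltnW.
Qed.

Lemma ordered_partition_block_uniq N k (B : {ffun 'I_k -> {set 'I_N}}) i j z :
  ordered_partition B -> z \in B i -> z \in B j -> i = j.
Proof.
case/andP => /andP [_ /forallP disj] _ zi zj; apply/eqP; apply: contraTT isT => ij.
have := implyP (forallP (disj i) j) ij; rewrite -setI_eq0 => /eqP /setP /(_ z).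
by rewrite !inE zi zj.
Qed.

Lemma set2_lt_inj n (x y x' y' : 'I_n) :
  x < y -> x' < y' -> [set x; y] = [set x'; y'] -> x = x' /\ y = y'.
Proof.
move=> xy xy' /setP e; move: (e x) (e y); rewrite !inE !eqxx orbT /= -!val_eqE.
by move=> /= /esym hx /esym hy; split; apply: val_inj => /=; lia.
Qed.

Lemma nth_map_val n k (f : k.-tuple 'I_n) (i : 'I_k) : nth 0 (map val f) i = tnth f i.
Proof. by rewrite (nth_map (tnth f i)) ?size_tuple // -tnth_nth. Qed.

Section Encoding.
Variable m : nat.
Local Notation K := m.+1.
Local Notation N := m.+2.
Implicit Types (b : 'I_N) (f : K.-tuple 'I_N) (i : 'I_K).

Definition partition_of b f : {ffun 'I_K -> {set 'I_N}} :=
  [ffun i => if i == ord0 then [set tnth f ord0; b] else [set tnth f i]].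

Lemma mem_partition_of b f i y :
  (y \in partition_of b f i) = (y == tnth f i) || (i == ord0) && (y == b).
Proof. by rewrite ffunE; case: eqP => [->|]; rewrite !inE ?orbF. Qed.

Lemma tnth_partition_of b f i : tnth f i \in partition_of b f i.
Proof. by rewrite mem_partition_of eqxx. Qed.

Lemma contains123_partition_of b f :
  tnth f ord0 < b -> contains_pat p123 (partition_of b f) = has123 (map val f).
Proof.
move=> f0b; apply/contains123P/has123P.
  move=> [i [j [l [x [y [z [/andP [ij jl] [xB yB zB] /andP [xy yz]]]]]]]].
  have singleton (k : 'I_K) a : 0 < k -> a \in partition_of b f k -> a = tnth f k.
    move=> k0; rewrite mem_partition_of (_ : k == ord0 = false) ?orbF => [/eqP //|].
    by apply: contraTF k0 => /eqP ->.
  have fx : tnth f i <= x.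
    move: xB; rewrite mem_partition_of => /orP [/eqP -> //|/andP [/eqP -> /eqP ->]].
    exact: ltnW.
  have j0 : 0 < j := leq_ltn_trans (leq0n i) ij.
  have ey := singleton j y j0 yB; have ez := singleton l z (ltn_trans j0 jl) zB.
  subst y z; exists i, j, l; rewrite size_map size_tuple ltn_ord !nth_map_val.
  by rewrite (leq_ltn_trans fx xy) yz.
move=> [i [j [l [ij jl]]]]; rewrite size_map size_tuple => lK.
have jK := ltn_trans jl lK; have iK := ltn_trans ij jK.
rewrite -[i]/(val (Ordinal iK)) -[j]/(val (Ordinal jK)) -[l]/(val (Ordinal lK)) !nth_map_val.
move=> fijl; exists (Ordinal iK), (Ordinal jK), (Ordinal lK).
exists (tnth f (Ordinal iK)), (tnth f (Ordinal jK)), (tnth f (Ordinal lK)).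
by rewrite ij jl !tnth_partition_of.
Qed.

Definition avoiders := [set B : {ffun 'I_K -> {set 'I_N}} | ordered_partition B &&
   [forall i, #|B i| == (if i == ord0 then 2 else 1)] && ~~ contains_pat p123 B].

Definition encodings := [set p : 'I_N * K.-tuple 'I_N |
   [&& uniq p.2, p.1 \notin p.2, tnth p.2 ord0 < p.1 & ~~ has123 (map val p.2)]].

Lemma partition_of_inj : {in encodings &, injective (fun p => partition_of p.1 p.2)}.
Proof.
move=> [b f] [b' f']; rewrite !inE /= => /and4P [_ _ fb _] /and4P [_ _ fb' _] /ffunP e.
have [f0 bb'] : tnth f ord0 = tnth f' ord0 /\ b = b'.
  by apply: set2_lt_inj fb fb' _; have := e ord0; rewrite !ffunE eqxx.
congr pair => //; apply: eq_from_tnth => i; case: (i =P ord0) => [-> //|/eqP i0].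
by have := e i; rewrite !ffunE (negbTE i0) => /set1_inj.
Qed.

Lemma partition_of_avoider b f : (b, f) \in encodings -> partition_of b f \in avoiders.
Proof.
rewrite !inE /= => /and4P [uf bf fb nh].
have finj : injective (tnth f) by apply/tuple_uniqP.
rewrite contains123_partition_of // nh andbT; apply/andP; split; last first.
  apply/forallP => i; rewrite ffunE; case: ifP => _; last by rewrite cards1.
  by rewrite cards2 -val_eqE /= (ltn_eqF fb).
apply/andP; split; [apply/andP; split|].
- apply/forallP => i; apply/set0Pn; exists (tnth f i); exact: tnth_partition_of.
- apply/forallP => i; apply/forallP => j; apply/implyP => ij.
  rewrite -setI_eq0; apply/eqP/setP => z; rewrite !inE !mem_partition_of.
  case: (z =P b) => [->|_]; last first.
    by rewrite !andbF !orbF; apply: contraNF ij => /andP [/eqP -> /eqP /finj ->].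
  have bf' k : (b == tnth f k) = false by apply: contraNF bf => /eqP ->; apply: mem_tnth.
  by rewrite !bf' !andbT; apply: contraNF ij => /andP [/eqP -> /eqP ->].
- rewrite eqEcard subsetT cardsT card_ord /=.
  have sub : b |: [set:: f] \subset \bigcup_i partition_of b f i.
    apply/subsetP => z; rewrite !inE => /orP [/eqP ->|/tnthP [i ->]]; apply/bigcupP.
      by exists ord0; rewrite // mem_partition_of !eqxx orbT.
    by exists i; rewrite // tnth_partition_of.
  apply: leq_trans (subset_leq_card sub).
  by rewrite cardsU1 inE bf cardsE (card_uniqP uf) size_tuple.
Qed.

Lemma avoider_encoded B :
  B \in avoiders -> exists2 p, p \in encodings & B = partition_of p.1 p.2.
Proof.
rewrite inE => /andP [/andP [opB /forallP sizes] nc].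
have [x [y [xy B0]]] : exists x y : 'I_N, x < y /\ B ord0 = [set x; y].
  have := sizes ord0; rewrite eqxx => /cards2P [x0 [y0 [xy0 ->]]].
  case: (ltngtP x0 y0) => h; first by exists x0, y0.
    by exists y0, x0; rewrite setUC.
  by move/val_inj: h xy0 => ->; rewrite eqxx.
pose f := [tuple if i == ord0 then x else odflt x [pick z in B i] | i < K].
have f0 : tnth f ord0 = x by rewrite tnth_mktuple eqxx.
have Bf : B = partition_of y f.
  apply/ffunP => i; rewrite ffunE; case: eqP => [-> //|/eqP i0]; first by rewrite f0.
  have := sizes i; rewrite tnth_mktuple (negbTE i0) => /cards1P [z ->].
  by case: pickP => [z' /set1P -> //|/(_ z)]; rewrite inE eqxx.
clearbody f; have fB i : tnth f i \in B i by rewrite Bf tnth_partition_of.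
exists (y, f) => //; rewrite inE /= f0 xy -(contains123_partition_of (b := y)) ?f0 // -Bf nc !andbT.
apply/andP; split.
  by apply/tuple_uniqP => i j e; apply: (ordered_partition_block_uniq opB (fB i)); rewrite e.
apply/negP => /tnthP [j yj].
have yB0 : y \in B ord0 by rewrite B0 !inE eqxx orbT.
have yBj : y \in B j by rewrite yj.
have j0 := ordered_partition_block_uniq opB yB0 yBj.
by move: xy; rewrite yj -j0 f0 ltnn.
Qed.

Lemma card_avoiders : #|avoiders| = #|encodings|.
Proof.
rewrite -(card_in_imset partition_of_inj); congr #|pred_of_set _|.
apply/setP => B; apply/idP/imsetP => [/avoider_encoded [p pE ->]|[[b f] pE ->]].
  by exists p.
exact: partition_of_avoider.
Qed.

End Encoding.

Lemma card_ord_lt N x : x <= N -> #|[set r : 'I_N | r < x]| = x.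
Proof.
move=> xN; have -> : [set r : 'I_N | r < x] = widen_ord xN @: [set: 'I_x].
  apply/setP => r; rewrite inE; apply/idP/imsetP => [rx|[i _ ->]]; last exact: (ltn_ord i).
  by exists (Ordinal rx); rewrite ?inE //; apply: val_inj.
rewrite card_imset ?cardsT ?card_ord //.
by move=> i j /(congr1 val) ij; apply: val_inj.
Qed.

Lemma card_setC2 n (x b : 'I_n.+2) : x != b -> #|~: [set x; b]| = n.
Proof. by move=> xb; move: (cardsC [set x; b]); rewrite cards2 xb card_ord add2n => -[]. Qed.

Lemma uniq_tuple_setC2 n (x b : 'I_n.+2) (s : n.-tuple 'I_n.+2) : x != b ->
  uniq (x :: s) && (b \notin x :: s) = uniq s && ([set:: s] == ~: [set x; b]).
Proof.
move=> xb; rewrite /= inE negb_or eq_sym (negbTE xb) /=.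
case us: (uniq s); rewrite ?andbF //=.
rewrite eqEcard card_setC2 // cardsE (card_uniqP us) size_tuple leqnn !andbT.
apply/andP/subsetP => [[xs bs] z|sR].
  rewrite !inE negb_or => zs.
  by apply/andP; split; apply/eqP => zE; move: zs; rewrite zE; apply/negP.
by split; [move/(_ x): sR | move/(_ b): sR]; rewrite !inE eqxx ?orbT /= => h; apply/negP => /h.
Qed.

Lemma card_extensions m (x b : 'I_m.+2) : x < b ->
  #|[set s : m.-tuple 'I_m.+2 |
      [&& uniq (x :: s), b \notin x :: s & ~~ has123 (map val (x :: s))]]| = ballot m x.
Proof.
move=> xb; have xb' : x != b by rewrite neq_ltn xb.
set R := ~: [set x; b].
have belowx : [set r in R | r < x] = [set r : 'I_m.+2 | r < x].
  apply/setP => r; rewrite !inE; case rx: (r < x); rewrite ?andbF // andbT.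
  by rewrite negb_or; apply/andP; split; apply: contraTneq rx => ->; rewrite ?ltnn // ltnNge ltnW.
rewrite -(card_ord_lt (ltnW (ltn_ord x))) -belowx.
rewrite -(count_free123E (t := m.+2)) ?card_setC2 //; first last.
- by apply/forall_inP => r _; apply: ltn_ord.
- by move=> r; rewrite !inE negb_or => /andP [].
apply: eq_card => s; rewrite !inE andbA uniq_tuple_setC2 //; congr (_ && _).
rewrite -(free123_top (N := m.+2)) /=; last by rewrite ltn_ord; apply/allP => _ /mapP [z _ ->].
by rewrite free123_cons ltn_ord (minn_idPr (ltnW (ltn_ord x))) ltnNge (ltnW (ltn_ord x)).
Qed.

Lemma card_encodings m : #|encodings m| = \sum_(b < m.+2) \sum_(x < b) ballot m x.
Proof.
rewrite /encodings card_set_pair; apply: eq_bigr => b _.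
rewrite card_set_tuple_cons (big_ord_widen _ (ballot m) (ltnW (ltn_ord b))) [RHS]big_mkcond.
apply: eq_bigr => x _; case: ltnP => [xb|bx]; last first.
  by apply: eq_card0 => s; rewrite !inE /= !andbF.
by rewrite -(card_extensions xb); apply: eq_card => s; rewrite !inE.
Qed.

Lemma op_avoiders m : op (2 :: nseq m 1) p123 = #|avoiders m|.
Proof.
rewrite /op; set b := 2 :: nseq m 1.
have hs : size b = m.+1 by rewrite /= size_nseq.
have hn : sumn b = m.+2 by rewrite /= sumn_nseq mul1n.
have hc i : i < m.+1 -> nth 0 b i = if i == 0 then 2 else 1.
  by case: i => [|i] //= im; rewrite nth_nseq -ltnS im.
(* [size b] and [sumn b] occur in the types of the partitions, so they are generalized first. *)
move: (nth 0 b) hc => c hc; move: (size b) (sumn b) hs hn => K N -> ->.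
apply: eq_card => B; rewrite !inE; congr (_ && _ && _).
by apply: eq_forallb => i; rewrite hc ?ltn_ord.
Qed.

Import GRing.Theory Num.Theory.
Local Open Scope ring_scope.

Lemma natr_fact_neq0 n : n`!%:R != 0 :> rat.
Proof. by rewrite pnatr_eq0 -lt0n fact_gt0. Qed.

Lemma ballot_closed p q :
  (ballot (p + q) p)%:R = (q.+1 * (p.*2 + q)`!)%:R / (p`! * (p + q).+1`!)%:R :> rat.
Proof.
elim: p q => [|p IHp] q.
  by rewrite add0n ballotn0 fact0 mul1n -factS divff ?natr_fact_neq0.
elim: q => [|q IHq].
  rewrite !addn0 ballotSS // ltnn addn0 doubleS.
  have := IHp 1; rewrite !addn1 => ->.
  rewrite !factS -!muln2 !natrM !mulrS !natrM.
  by field; rewrite !natr_fact_neq0 -!mulrS !pnatr_eq0.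
have pq : (p < p + q.+1)%N by rewrite addnS ltnS leq_addr.
rewrite addSn ballotSS ?(ltnW pq) // pq natrD -addnS IHp -(addSnnS p q) IHq.
rewrite !doubleS !addSn !addnS !factS -!muln2 !natrM !mulrS !natrD !natrM.
by field; rewrite !natr_fact_neq0 -!natrD -!mulrS !pnatr_eq0.
Qed.

Lemma ballot_diff_closed p :
  (ballot p.+2 p.+1)%:R - (ballot p.+1 p.+1)%:R =
  (3 * p.+1 * 'C(p.+1.*2, p.+1))%:R / (p.+2 * p.+3)%:R :> rat.
Proof.
have := ballot_closed p.+1 1; have := ballot_closed p.+1 0; rewrite !addn1 !addn0 => -> ->.
have := bin_fact (leq_addr p.+1 p.+1); rewrite addnK addnn => binE.
rewrite (natrM _ (3 * p.+1)).
have -> : ('C(p.+1.*2, p.+1))%:R = (p.+1.*2)`!%:R / ((p.+1)`! * (p.+1)`!)%:R :> rat.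
  by rewrite -binE natrM mulfK // natrM mulf_neq0 ?natr_fact_neq0.
rewrite !doubleS !factS -!muln2 !natrM !mulrS !natrM.
by field; rewrite !natr_fact_neq0 -!mulrS !pnatr_eq0.
Qed.

Theorem lemma2 (n : nat) (hn : (2 <= n)%N) :
  ((op (2 :: nseq (n - 2) 1)%N p123)%:R : rat) =
  (3 * (n - 1) * 'C(2 * n - 2, n - 1))%:R / (n * (n + 1))%:R.
Proof.
case: n hn => [|[|m]] // _.
rewrite subn2 /= op_avoiders card_avoiders card_encodings.
have -> : (\sum_(b < m.+2) \sum_(x < b) ballot m x)%:R =
          (ballot m.+2 m.+1)%:R - (ballot m.+1 m.+1)%:R :> rat.
  by rewrite -ballot_sum natrD addrK.
have -> : (2 * m.+2 - 2 = m.+1.*2)%N by rewrite -muln2; lia.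
by rewrite ballot_diff_closed subn1 addn1.
Qed.
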